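(* Let $f:A\to B$ be a surjective homomorphism of $K$-algebras, let $\mathcal{F}=\{V_n\}$ be a filtration of $A$ and let $\mathcal{G}=\{f(V_n)\}$ be the induced filtration of $B$. Then $\mathrm{h}_{\mathrm{alg}}(B,\mathcal{G})\le\mathrm{h}_{\mathrm{alg}}(A,\mathcal{F})$. In particular, for a finite directed graph $E$, $\mathrm{h}_{\mathrm{alg}}(L_K(E))\le\mathrm{h}_{\mathrm{alg}}(K\hat E)$, both with their standard filtrations.
   Context: A filtration of $A$ is a family $\{V_n\}_{n\ge0}$ of subspaces with $V_0\subseteq V_1\subseteq\cdots$, $A=\bigcup_nV_n$, $V_nV_m\subseteq V_{n+m}$, with finite-dimensional quotients $V_n/V_{n-1}$. $\mathrm{h}_{\mathrm{alg}}(A,\mathcal{F})=0$ if $A$ is finite-dimensional and otherwise $\limsup_n\frac1n\log\dim(V_n/V_{n-1})$. For a finite directed graph $E=(E^0,E^1,s,r)$, the extended graph $\hat E$ has vertices $E^0$ and edges $E^1\cup\{e^*:e\in E^1\}$ with $s(e^* )=r(e)$, $r(e^* )=s(e)$. The path algebra $KF$ of a graph $F$ has basis the paths of $F$ (vertices as length-0 paths) with concatenation product; its standard filtration is the span of paths of length $\le n$. The Leavitt path algebra $L_K(E)$ is the quotient of $K\hat E$ by the relations $e^*f=\delta_{e,f}r(e)$ ($e,f\in E^1$) and $\sum_{s(e)=v}ee^*=v$ for each vertex $v$ with $0<|s^{-1}(v)|<\infty$; its standard filtration is the span of $\lambda\mu^*$ with $\lambda,\mu$ paths of $E$ and $l(\lambda)+l(\mu)\le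 n$ (which is the image of the standard filtration of $K\hat E$). *)

From HB Require Import structures.
From mathcomp Require Import all_boot all_algebra.
From mathcomp.multinomials Require Import monalg.
From mathcomp Require Import classical_sets boolp reals ereal sequences exp.

Set Implicit Arguments.
Unset Strict Implicit.
Unset Printing Implicit Defensive.

Import GRing.Theory.
Local Open Scope classical_set_scope.
Local Open Scope ring_scope.

Section Generic.
Variables (K : fieldType) (A : lmodType K).

Definition subspace (V : set A) : Prop :=
  V 0 /\ forall (a : K) (x y : A), V x -> V y -> V (a *: x + y).

Definition is_algebra (mul : A -> A -> A) : Prop :=
  associative mul /\
  (forall x y z, mul (x + y) z = mul x z + mul y z) /\
  (forall x y z, mul x (y + z) = mul x y + mul x z) /\
  (forall (a : K) x y, mul (a *: x) y = a *: mul x y /\ mul x (a *: y) = a *: mul x y).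

(* s is a list of vectors of V spanning V modulo W, i.e. whose classes
   span the quotient V/W *)
Definition spans_mod (W V : set A) (s : seq A) : Prop :=
  (forall i, (i < size s)%N -> V s`_i) /\
  forall v, V v -> exists c : 'I_(size s) -> K,
      W (v - \sum_(i < size s) c i *: s`_i).

Definition fin_dim_quot (W V : set A) : Prop := exists s, spans_mod W V s.

(* dim (V/W): the least size of a spanning family of V/W
   (set to 0 if V/W is not finite dimensional; never used in that case) *)
Definition qdim (W V : set A) : nat :=
  match pselect (exists n, `[< exists s, size s = n /\ spans_mod W V s >]) with
  | left H => ex_minn H
  | right _ => 0%N
  end.

Definition fin_dim_space : Prop := fin_dim_quot [set 0] setT.

Definition prevV (V : nat -> set A) (n : nat) : set A :=
  if n is m.+1 then V m else [set 0].

Definition is_filtration (mul : A -> A -> A) (V : nat -> set A) : Prop :=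
  (forall n, subspace (V n)) /\
  (forall n, V n `<=` V n.+1) /\
  (forall x, exists n, V n x) /\
  (forall n m x y, V n x -> V m y -> V (n + m)%N (mul x y)) /\
  (forall n, fin_dim_quot (prevV V n) (V n)).

Definition quot_dim (V : nat -> set A) (n : nat) : nat := qdim (prevV V n) (V n).

Definition h_alg (R : realType) (V : nat -> set A) : \bar R :=
  if `[< fin_dim_space >] then 0%E
  else limn_esup (fun n => let d := quot_dim V n in
                   if d == 0%N then -oo%E
                   else ((ln (d%:R : R)) / n%:R)%:E).

Definition is_ideal (mul : A -> A -> A) (J : set A) : Prop :=
  subspace J /\ forall x y, J y -> J (mul x y) /\ J (mul y x).

Definition gen_ideal (mul : A -> A -> A) (S : set A) : set A :=
  [set x | forall J, is_ideal mul J -> S `<=` J -> J x].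

End Generic.

Section Graph.
Variables (K : fieldType) (E0 E1 : finType) (src rng : E1 -> E0).

(* edges of \hat E : inl e = e, inr e = e^* *)
Definition hedge : Type := (E1 + E1)%type.
Definition hsrc (x : hedge) : E0 :=
  match x with inl e => src e | inr e => rng e end.
Definition hrng (x : hedge) : E0 :=
  match x with inl e => rng e | inr e => src e end.

(* a path of \hat E: start vertex v and edge list; length-0 paths are
   the vertices *)
Definition is_hpath (p : E0 * seq hedge) : bool :=
  (if p.2 is x :: _ then hsrc x == p.1 else true) &&
  sorted (fun x y => hrng x == hsrc y) p.2.

Definition hpath : Type := {p : E0 * seq hedge | is_hpath p}.
HB.instance Definition _ := Choice.on hpath.

Definition hp_src (p : hpath) : E0 := (val p).1.
Definition hp_rng (p : hpath) : E0 :=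
  if (val p).2 is x :: s then hrng (last x s) else (val p).1.
Definition hp_len (p : hpath) : nat := size (val p).2.

Definition PA := monalg.malg hpath K.

Definition bas (p : hpath) : PA := monalg.mkmalgU p (1 : K).

Definition hp_cat (p q : hpath) : PA :=
  if hp_rng p == hp_src q then
    (if insub ((val p).1, (val p).2 ++ (val q).2) is Some u then bas u else 0)
  else 0.

Definition pa_mul (x y : PA) : PA :=
  \sum_(p <- finmap.enum_fset (monalg.msupp x)) \sum_(q <- finmap.enum_fset (monalg.msupp y))
     (monalg.mcoeff p x * monalg.mcoeff q y) *: hp_cat p q.

Definition std_filt (n : nat) : set PA :=
  [set x | exists (s : seq hpath) (c : hpath -> K),
     all (fun p => (hp_len p <= n)%N) s /\ x = \sum_(p <- s) c p *: bas p].

Definition vtx (v : E0) : PA :=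
  if insub (v, [::] : seq hedge) is Some u then bas u else 0.
Definition hed (x : hedge) : PA :=
  if insub (hsrc x, [:: x]) is Some u then bas u else 0.

Definition ck1 (e f : E1) : PA :=
  pa_mul (hed (inr e)) (hed (inl f)) - (if e == f then vtx (rng e) else 0).
Definition ck2 (v : E0) : PA :=
  \sum_(e | src e == v) pa_mul (hed (inl e)) (hed (inr e)) - vtx v.

Definition leavitt_rels : set PA :=
  [set x | (exists e f, x = ck1 e f) \/
           (exists v, [exists e, src e == v] /\ x = ck2 v)].

(* the kernel of K \hat E -> L_K(E) *)
Definition leavitt_ideal : set PA := gen_ideal pa_mul leavitt_rels.

End Graph.

From HB Require Import structures.
From mathcomp Require Import all_boot all_order all_algebra.
From mathcomp.multinomials Require Import monalg.
From mathcomp Require Import classical_sets boolp reals ereal sequences exp.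
From mathcomp Require Import normedtype.

(* A family spanning V_n modulo V_{n-1} is mapped by f onto a family spanning
   f(V_n) modulo f(V_{n-1}), so the quotient dimensions of the image filtration
   are termwise at most those of V and the limsup can only decrease.  In the
   degenerate cases, B is finite dimensional whenever A is, and if A is infinite
   dimensional then infinitely many quotients V_n/V_{n-1} are nonzero, whence
   h_alg(A) >= 0. *)

Set Implicit Arguments.
Unset Strict Implicit.
Unset Printing Implicit Defensive.
Import GRing.Theory Num.Theory Order.TTheory.
Local Open Scope classical_set_scope.
Local Open Scope ring_scope.

Section SpansMod.
Variables (K : fieldType) (A : lmodType K).
Implicit Types (U V W : set A) (s t : seq A).

Lemma spans_modP W V s : spans_mod W V s <->
  (forall i, (i < size s)%N -> V s`_i) /\
  (forall v, V v -> exists c : nat -> K,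
      W (v - \sum_(0 <= i < size s) c i *: s`_i)).
Proof.
split=> -[Vs span]; split=> // v Vv; have [c Wc] := span v Vv.
  exists (fun k => if insub k is Some j then c j else 0).
  rewrite big_mkord; congr (W (_ - _)): Wc; apply: eq_bigr => i _.
  by rewrite valK.
by exists (fun i => c (val i)); rewrite big_mkord in Wc.
Qed.

Lemma spans_mod_sub W W' V V' s : spans_mod W V s -> W `<=` W' ->
  V' `<=` V -> (forall i, (i < size s)%N -> V' s`_i) -> spans_mod W' V' s.
Proof.
move=> [_ span] WW' V'V V's; split=> // v /V'V Vv.
by have [c Wc] := span v Vv; exists c; apply: WW'.
Qed.

Lemma qdim_min W V s : spans_mod W V s -> (qdim W V <= size s)%N.
Proof.
move=> span; rewrite /qdim; case: pselect => [ex|//].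
by case: ex_minnP => m _; apply; apply/asboolP; exists s.
Qed.

Lemma qdim_spans W V : fin_dim_quot W V ->
  exists2 s, spans_mod W V s & qdim W V = size s.
Proof.
move=> [s span]; rewrite /qdim; case: pselect => [ex|nex]; last first.
  by exfalso; apply: nex; exists (size s); apply/asboolP; exists s.
by case: ex_minnP => m /asboolP [t [<- ?]] _; exists t.
Qed.

Lemma qdim_eq0 W V : fin_dim_quot W V -> qdim W V = 0%N -> V `<=` W.
Proof.
move=> /qdim_spans [s [_ span] ->] s0 v /span [c].
by rewrite big1 ?subr0 // => i; have := ltn_ord i; rewrite [X in (_ < X)%N]s0.
Qed.

Lemma spans_mod_cat U V s t : spans_mod [set 0] U s -> spans_mod U V t ->
  U `<=` V -> spans_mod [set 0] V (s ++ t).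
Proof.
move=> /spans_modP [Us spanU] /spans_modP [Vt spanV] UV; apply/spans_modP.
split=> [i|v Vv].
  rewrite size_cat nth_cat; case: ifPn => [lt _|]; first exact: UV (Us _ lt).
  by rewrite -leqNgt => le lt; apply: Vt; rewrite ltn_subLR.
have [c Uc] := spanV v Vv; have [d /= /eqP] := spanU _ Uc.
rewrite subr_eq0 => /eqP d_def.
exists (fun i => if (i < size s)%N then d i else c (i - size s)%N).
rewrite size_cat (big_cat_nat _ (leq_addr _ _)) //=.
rewrite (big_addn 0 (size s + size t) (size s)) addKn.
apply/eqP; rewrite -[v](subrK (\sum_(0 <= i < size t) c i *: t`_i)) d_def.
rewrite subr_eq0; apply/eqP; congr (_ + _); apply: eq_big_nat => i /andP [_ lt].
  by rewrite lt nth_cat lt.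
by rewrite nth_cat ltnNge leq_addl addnK.
Qed.

End SpansMod.

Section LinearCombinations.
Variables (K : fieldType) (M : lmodType K) (T : eqType).

Lemma sum_scale_regroup (g : T -> M) (c : T -> K) (s L : seq T) :
  uniq L -> all (mem L) s ->
  \sum_(p <- s) c p *: g p = \sum_(q <- L) (\sum_(p <- s | p == q) c p) *: g q.
Proof.
move=> uL sL.
under [RHS]eq_bigr => q _ do rewrite scaler_suml big_mkcond /=.
rewrite exchange_big /= big_seq [RHS]big_seq; apply: eq_bigr => p ps.
rewrite -big_mkcond /= -big_filter.
have -> : [seq q <- L | p == q] = [:: p].
  rewrite -(filter_pred1_uniq uL); last exact: (allP sL).
  by apply: eq_filter => q /=; rewrite eq_sym.
by rewrite big_seq1.
Qed.

Lemma sum_scale_nth (g : T -> M) (c : T -> K) (s L : seq T) :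
  uniq L -> all (mem L) s -> exists e : nat -> K,
  \sum_(p <- s) c p *: g p = \sum_(0 <= i < size L) e i *: (map g L)`_i.
Proof.
move=> uL sL; rewrite (sum_scale_regroup g c uL sL).
case: L {uL sL} => [|x0 L]; first by exists (fun _ => 0); rewrite big_nil big_geq.
exists (fun i => \sum_(p <- s | p == nth x0 (x0 :: L) i) c p).
rewrite (big_nth x0); apply: eq_big_nat => i /andP [_ lt].
by rewrite (nth_map x0).
Qed.

End LinearCombinations.

Section FiltrationDim.
Variables (K : fieldType) (A : lmodType K) (V : nat -> set A).
Hypotheses (V_mono : forall n, V n `<=` V n.+1)
           (V_fin : forall n, fin_dim_quot (prevV V n) (V n)).

Lemma filt_le : {homo V : m n / (m <= n)%N >-> m `<=` n}.
Proof. exact: homo_leq (@subset_refl _) (fun _ _ _ => @subset_trans _ _ _ _) V_mono. Qed.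

Lemma filt_fin_dim n : fin_dim_quot [set 0] (V n).
Proof.
elim: n => [|n [s span]]; first exact: V_fin.
have [t spant] := V_fin n.+1.
by exists (s ++ t); apply: spans_mod_cat span spant (@V_mono n).
Qed.

Lemma filt_stationary N : (forall n, (N < n)%N -> quot_dim V n = 0%N) ->
  forall n, V n `<=` V N.
Proof.
move=> q0; elim=> [|n IH]; first exact: filt_le.
have [/filt_le //|Nn] := leqP n.+1 N.
exact: subset_trans (qdim_eq0 (V_fin n.+1) (q0 _ Nn)) IH.
Qed.

Hypothesis V_exh : forall x, exists n, V n x.

Lemma quot_dim_neq0_often : ~ fin_dim_space A ->
  forall N, exists2 n, (N <= n)%N & quot_dim V n != 0%N.
Proof.
move=> Ainf N; apply: contrapT => noq; apply: Ainf.
have q0 n : (N < n)%N -> quot_dim V n = 0%N.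
  by move=> /ltnW Nn; apply/eqP/negPn/negP => qn; apply: noq; exists n.
have [s span] := filt_fin_dim N; exists s.
apply: spans_mod_sub span _ _ _ => // x _.
by have [n Vnx] := V_exh x; exact: filt_stationary q0 n x Vnx.
Qed.

End FiltrationDim.

Section LinearImage.
Variables (K : fieldType) (A B : lmodType K) (f : {linear A -> B}).

Lemma image_zero : f @` [set 0] `<=` [set 0].
Proof. by move=> _ [x -> <-]; rewrite linear0. Qed.

Lemma image_prevV (V : nat -> set A) n :
  f @` prevV V n `<=` prevV (fun m => f @` V m) n.
Proof. by case: n => [|n] //=; exact: image_zero. Qed.

Lemma spans_mod_image (W U : set A) s :
  spans_mod W U s -> spans_mod (f @` W) (f @` U) (map f s).
Proof.
move=> /spans_modP [Us span]; apply/spans_modP; rewrite size_map; split.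
  by move=> i lt; rewrite (nth_map 0) //; exists s`_i => //; apply: Us.
move=> _ [x Ux <-]; have [c Wc] := span x Ux; exists c.
exists (x - \sum_(0 <= i < size s) c i *: s`_i) => //.
rewrite linearB linear_sum; congr (_ - _).
by apply: eq_big_nat => i /andP [_ lt]; rewrite linearZ (nth_map 0).
Qed.

Lemma quot_dim_image_le (V : nat -> set A) n :
  fin_dim_quot (prevV V n) (V n) ->
  (quot_dim (fun m => f @` V m) n <= quot_dim V n)%N.
Proof.
rewrite /quot_dim => /qdim_spans [s span ->]; rewrite -(size_map f).
have spanf := spans_mod_image span.
exact: qdim_min (spans_mod_sub spanf (@image_prevV V n) (@subset_refl _ _) spanf.1).
Qed.

Lemma fin_dim_space_image : (forall y, exists x, f x = y) ->
  fin_dim_space A -> fin_dim_space B.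
Proof.
move=> fsurj [s span]; exists (map f s).
apply: spans_mod_sub (spans_mod_image span) image_zero _ _ => // y _.
by have [x <-] := fsurj y; exists x.
Qed.

End LinearImage.

Section GrowthRate.
Variable R : realType.
Local Open Scope ereal_scope.
Implicit Types u v : (\bar R)^nat.

Lemma le_limn_esup u v : (forall n, u n <= v n) -> limn_esup u <= limn_esup v.
Proof.
move=> uv; rewrite !limn_esup_lim.
apply: lee_lim; [exact: is_cvg_esups|exact: is_cvg_esups|].
apply: nearW => n; apply: ge_ereal_sup => _ [k /= nk <-].
by apply: le_trans (uv k) _; apply: ereal_sup_ubound; exists k.
Qed.

Lemma limn_esup_ge0_often u :
  (forall N, exists2 n, (N <= n)%N & 0 <= u n) -> 0 <= limn_esup u.
Proof.
move=> often; rewrite limn_esup_lim; apply: lime_ge; first exact: is_cvg_esups.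
apply: nearW => N; have [n Nn un] := often N.
by apply: le_ereal_sup_tmp; exists (u n) => //; exists n.
Qed.

Definition growth_term (n d : nat) : \bar R :=
  if d == 0%N then -oo else (ln (d%:R : R) / n%:R)%:E.

Lemma growth_term_homo n :
  {homo growth_term n : d1 d2 / (d1 <= d2)%N >-> d1 <= d2}.
Proof.
move=> d1 d2 le; rewrite /growth_term.
have [_|d1_gt0] := posnP d1; first by rewrite leNye.
have d2_gt0 : (0 < d2)%N := leq_trans d1_gt0 le.
rewrite gtn_eqF // lee_fin ler_wpM2r ?invr_ge0 //.
by rewrite ler_ln ?posrE ?ltr0n // ler_nat.
Qed.

Lemma growth_term_ge0 n d : d != 0%N -> 0 <= growth_term n d.
Proof.
move=> d_neq0; rewrite /growth_term (negbTE d_neq0) lee_fin.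
by rewrite divr_ge0 // ln_ge0 // ler1n lt0n.
Qed.

Lemma h_algE (K : fieldType) (A : lmodType K) (V : nat -> set A) :
  h_alg R V = if `[< fin_dim_space A >] then 0
              else limn_esup (fun n => growth_term n (quot_dim V n)).
Proof. by []. Qed.

End GrowthRate.

Theorem h_alg_image_le (R : realType) (K : fieldType) (A B : lmodType K)
    (f : {linear A -> B}) (V : nat -> set A) :
  (forall y, exists x, f x = y) ->
  (forall n, V n `<=` V n.+1) -> (forall x, exists n, V n x) ->
  (forall n, fin_dim_quot (prevV V n) (V n)) ->
  (h_alg R (fun n => f @` V n) <= h_alg R V)%E.
Proof.
move=> fsurj V_mono V_exh V_fin; rewrite !h_algE.
case: ifPn => /asboolP Bfin; case: ifPn => /asboolP Afin //.
- apply: limn_esup_ge0_often => N.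
  have [n Nn qn] := quot_dim_neq0_often V_mono V_fin V_exh Afin N.
  by exists n => //; exact: growth_term_ge0.
- by case: Bfin; exact: fin_dim_space_image fsurj Afin.
- by apply: le_limn_esup => n; apply/growth_term_homo/quot_dim_image_le.
Qed.

Section StandardFiltration.
Variables (K : fieldType) (E0 E1 : finType) (src rng : E1 -> E0).

Local Notation PA := (@PA K E0 E1 src rng).
Local Notation hpath := (@hpath E0 E1 src rng).
Local Notation std_filt := (@std_filt K E0 E1 src rng).
Local Notation bas := (@bas K E0 E1 src rng).

Lemma std_filt_mono n : std_filt n `<=` std_filt n.+1.
Proof.
move=> _ [s [c [short ->]]]; exists s, c; split => //.
by apply: sub_all short => p /leqW.
Qed.

Lemma std_filt0 n : std_filt n 0.
Proof. by exists [::], (fun _ => 0); rewrite big_nil. Qed.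

Lemma std_filt_bas n p : (hp_len p <= n)%N -> std_filt n (bas p).
Proof.
by move=> short; exists [:: p], (fun _ => 1); rewrite /= short big_seq1 scale1r.
Qed.

Lemma mcoeff_bas (p q : hpath) : (bas p)@_q = (p == q)%:R.
Proof. exact: mcoeffU. Qed.

(* Proved by explicit [eq_trans] steps: rewriting with the coefficient lemmas
   of monalg sends unification into a very long computation on this {malg}. *)
Lemma scale_bas c p : c *: bas p = << c *g p >>.
Proof.
apply/malgP => q; apply: (eq_trans (mcoeffZ c (bas p) q)).
apply: (eq_trans _ (esym (mcoeffU p c q))).
by rewrite (mcoeff_bas p q) mulr_natr.
Qed.

Lemma std_filt_exhaustive x : exists n, std_filt n x.
Proof.
exists (\max_(p <- finmap.enum_fset (msupp x)) hp_len p).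
exists (finmap.enum_fset (msupp x)), (fun p => x@_p); split.
  by apply/allP => p ps; exact: (leq_bigmax_seq _ ps).
rewrite {1}[x]monalgE; apply: eq_bigr => p _; exact/esym/scale_bas.
Qed.

Definition hpaths_upto n : seq hpath :=
  undup [seq p <- flatten
    [seq pmap insub [seq (v, tval t) | v <- enum E0, t <- enum {: k.-tuple (hedge E1)}]
    | k <- iota 0 n.+1] | (hp_len p <= n)%N].

Lemma mem_hpaths_upto n p : (p \in hpaths_upto n) = (hp_len p <= n)%N.
Proof.
rewrite mem_undup mem_filter andb_idr // => short.
apply/flatten_mapP; exists (hp_len p); first by rewrite mem_iota ltnS.
rewrite mem_pmap_sub.
have -> : val p = ((val p).1, tval (in_tuple (val p).2)) by case: (val p).
by apply: allpairs_f; rewrite mem_enum.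
Qed.

Lemma std_filt_fin_dim n : fin_dim_quot [set 0] (std_filt n).
Proof.
set L := hpaths_upto n; exists (map bas L); apply/spans_modP; split.
  move=> i lt; have /mapP [p pL ->] := mem_nth 0 lt.
  by apply: std_filt_bas; rewrite -mem_hpaths_upto.
move=> _ [s [c [short ->]]].
have sL : all (mem L) s.
  by apply: sub_all short => p; rewrite /= mem_hpaths_upto.
have [e ->] := sum_scale_nth bas c (undup_uniq _) sL.
by exists e; rewrite size_map subrr.
Qed.

Lemma std_filt_fin_dim_quot n : fin_dim_quot (prevV std_filt n) (std_filt n).
Proof.
have [s span] := std_filt_fin_dim n; exists s.
apply: spans_mod_sub span _ (@subset_refl _ _) span.1 => _ ->.
by case: n => [|n] //=; exact: std_filt0.
Qed.

End StandardFiltration.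

Theorem lemma4p1 :
  (forall (R : realType) (K : fieldType) (A B : lmodType K)
          (mulA : A -> A -> A) (mulB : B -> B -> B)
          (f : {linear A -> B}) (V : nat -> set A),
      is_algebra mulA -> is_algebra mulB ->
      (forall x y, f (mulA x y) = mulB (f x) (f y)) ->
      (forall y, exists x, f x = y) ->
      is_filtration mulA V ->
      (h_alg R (fun n => f @` V n) <= h_alg R V)%E) /\
  (forall (R : realType) (K : fieldType) (E0 E1 : finType) (s r : E1 -> E0)
          (L : lmodType K) (mulL : L -> L -> L) (pi : {linear @PA K E0 E1 s r -> L}),
      is_algebra mulL ->
      (forall x y, pi (pa_mul x y) = mulL (pi x) (pi y)) ->
      (forall y, exists x, pi x = y) ->
      (forall x, pi x = 0 <-> @leavitt_ideal K E0 E1 s r x) ->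
      (h_alg R (fun n => pi @` @std_filt K E0 E1 s r n) <= h_alg R (@std_filt K E0 E1 s r))%E).
Proof.
split.
  move=> R K A B mulA mulB f V _ _ _ fsurj [_ [V_mono [V_exh [_ V_fin]]]].
  exact: h_alg_image_le.
move=> R K E0 E1 s r L mulL pi _ _ pisurj _.
apply: h_alg_image_le => //.
- exact: std_filt_mono.
- exact: std_filt_exhaustive.
- exact: std_filt_fin_dim_quot.
Qed.
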